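(* Consider Algorithm ProxSAGA (described in the context) with minibatch size $b\le n$, $T\ge1$ iterations, and step size $\eta=\rho/L$, where $0<\rho<1/2$ satisfies $$\frac{16 n^2\rho^2}{b^3}+\rho\le 1 .$$ Then the output $x_a$ satisfies $$\mathbb E\big[\|\mathcal G_\eta(x_a)\|^2\big]\le \frac{2L\,(F(x^0)-F(x^* ))}{\rho(1-2\rho)\,T},$$ where $x^*$ is an optimal solution of $\min_x F(x)$.
   Context: Setting: Let $n,d\ge 1$ be integers and $[n]=\{1,\dots,n\}$. Let $f_1,\dots,f_n:\mathbb R^d\to\mathbb R$ be differentiable (possibly nonconvex) functions, each $L$-smooth for some $L>0$, i.e. $\|\nabla f_i(x)-\nabla f_i(y)\|\le L\|x-y\|$ for all $x,y\in\mathbb R^d$ and $i\in[n]$. Let $f=\frac1n\sum_{i=1}^n f_i$. Let $h:\mathbb R^d\to\mathbb R\cup\{+\infty\}$ be proper, lower semicontinuous and convex, with closed domain. Let $F=f+h$, and let $x^*$ be a global minimizer of $F$ on $\mathbb R^d$ (assumed to exist). For $\eta>0$, $\mathrm{prox}_{\eta h}(x):=\arg\min_{y\in\mathbb R^d}\big(h(y)+\frac1{2\eta}\|y-x\|^2\big)$, and the gradient mapping is $\mathcal G_\eta(x):=\frac1\eta\big[x-\mathrm{prox}_{\eta h}(x-\eta\nabla f(x))\big]$. Algorithm ProxSAGA$(x^0,T,b,\eta)$: Given $x^0\in\mathbb R^d$, positive integers $T,b$ and $\eta>0$, set $\alpha^0_i=x^0$ for all $i\in[n]$. For $t=0,1,\dots$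 let $g^t=\frac1n\sum_{i=1}^n\nabla f_i(\alpha^t_i)$. For $t=0,\dots,T-1$: draw two multisets $I_t,J_t$, each consisting of $b$ indices drawn independently and uniformly at random from $[n]$ (with replacement; $I_t$, $J_t$ independent of each other and of all previous draws); set $v^t=\frac1b\sum_{i\in I_t}\big(\nabla f_i(x^t)-\nabla f_i(\alpha^t_i)\big)+g^t$ and $x^{t+1}=\mathrm{prox}_{\eta h}(x^t-\eta v^t)$; set $\alpha^{t+1}_j=x^t$ for $j\in J_t$ and $\alpha^{t+1}_j=\alpha^t_j$ for $j\notin J_t$. The output $x_a$ is chosen uniformly at random from $\{x^0,\dots,x^{T-1}\}$. Expectations are over all randomness of the algorithm. *)

From Stdlib Require Import Reals.
From mathcomp Require Import all_boot.
Set Implicit Arguments. Unset Strict Implicit. Unset Printing Implicit Defensive.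
Open Scope R_scope.

Definition vec (d : nat) := 'I_d -> R.

Section Vec.
Variable d : nat.
Definition vadd (x y : vec d) : vec d := fun i => x i + y i.
Definition vsub (x y : vec d) : vec d := fun i => x i - y i.
Definition vscal (a : R) (x : vec d) : vec d := fun i => a * x i.
Definition vsum (I : finType) (F : I -> vec d) : vec d :=
  fun k => \big[Rplus/R0]_(i : I) F i k.
Definition dot (x y : vec d) : R := \big[Rplus/R0]_(i < d) (x i * y i).
Definition norm2 (x : vec d) : R := dot x x.
Definition norm (x : vec d) : R := sqrt (norm2 x).

Definition is_gradient (f : vec d -> R) (g : vec d -> vec d) : Prop :=
  forall x eps, 0 < eps -> exists delta, 0 < delta /\
    forall y, norm (vsub y x) < delta ->
      Rabs (f y - f x - dot (g x) (vsub y x)) <= eps * norm (vsub y x).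

(* Extended-valued h : R^d -> R u {+oo} is represented by its (effective)
   domain D and its values h on D; outside D, h = +oo. *)
Definition ext_proper (D : vec d -> Prop) : Prop := exists x, D x.

Definition ext_convex (D : vec d -> Prop) (h : vec d -> R) : Prop :=
  forall x y lam, D x -> D y -> 0 <= lam <= 1 ->
    D (vadd (vscal lam x) (vscal (1 - lam) y)) /\
    h (vadd (vscal lam x) (vscal (1 - lam) y)) <= lam * h x + (1 - lam) * h y.

Definition vclosed_set (D : vec d -> Prop) : Prop :=
  forall x, (forall eps, 0 < eps -> exists y, D y /\ norm (vsub y x) < eps) -> D x.

(* Lower semicontinuity of the extended-valued function (given a closed domain,
   lsc at points outside D is automatic; at points of D it reads as follows). *)
Definition ext_lsc (D : vec d -> Prop) (h : vec d -> R) : Prop :=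
  forall x, D x -> forall eps, 0 < eps -> exists delta, 0 < delta /\
    forall y, D y -> norm (vsub y x) < delta -> h x - eps < h y.

Definition is_prox (D : vec d -> Prop) (h : vec d -> R) (eta : R)
    (px : vec d -> vec d) : Prop :=
  forall x, D (px x) /\
    forall y, D y ->
      h (px x) + norm2 (vsub (px x) x) / (2 * eta) <= h y + norm2 (vsub y x) / (2 * eta).
End Vec.

Section Problem.
Variables (n d : nat) (f : 'I_n -> vec d -> R) (gf : 'I_n -> vec d -> vec d).

Definition favg (x : vec d) : R := / INR n * \big[Rplus/R0]_(i : 'I_n) f i x.
Definition gavg (x : vec d) : vec d := vscal (/ INR n) (vsum (fun i : 'I_n => gf i x)).

Definition grad_map (px : vec d -> vec d) (eta : R) (x : vec d) : vec d :=
  vscal (/ eta) (vsub x (px (vsub x (vscal eta (gavg x))))).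

(* One draw (I_t, J_t): two multisets of b indices, i.e. b-tuples of [n]. *)
Definition draw (b : nat) := ({ffun 'I_b -> 'I_n} * {ffun 'I_b -> 'I_n})%type.

Fixpoint saga_state (b : nat) (px : vec d -> vec d) (eta : R) (x0 : vec d)
    (w : nat -> option (draw b)) (t : nat) : vec d * ('I_n -> vec d) :=
  match t with
  | O => (x0, fun _ => x0)
  | S t' =>
    let (x, al) := saga_state px eta x0 w t' in
    match w t' with
    | None => (x, al)
    | Some (II, JJ) =>
      let g := vscal (/ INR n) (vsum (fun i : 'I_n => gf i (al i))) in
      let v := vadd (vscal (/ INR b)
                  (vsum (fun k : 'I_b => vsub (gf (II k) x) (gf (II k) (al (II k)))))) g in
      (px (vsub x (vscal eta v)),
       fun j => if [exists k, JJ k == j] then x else al j)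
    end
  end.

Definition sample_space (b T : nat) := {ffun 'I_T -> draw b}.

Definition draws_of (b T : nat) (om : sample_space b T) (t : nat) : option (draw b) :=
  match (insub t : option 'I_T) with Some k => Some (om k) | None => None end.

(* E || G_eta(x_a) ||^2, with a uniform on {0,..,T-1} independent of the draws. *)
Definition expected_sq_grad_map (b T : nat) (px : vec d -> vec d) (eta : R)
    (x0 : vec d) : R :=
  / (INR #|{: sample_space b T}| * INR T) *
  \big[Rplus/R0]_(om : sample_space b T) \big[Rplus/R0]_(a < T)
     norm2 (grad_map px eta (fst (saga_state px eta x0 (draws_of om) a))).
End Problem.

(* Write F = favg f + h and eta = rho / L.  Along the iterates, the Lyapunov
   function Phi(x, alpha) = F(x) + c (1/n) sum_i ||x - alpha_i||^2, with
   c = 2 n eta L^2 / b^2, decreases in expectation by at least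
   (eta/2) ||G_eta(x)||^2 per step.  One step combines the descent lemma for
   the L-smooth average with the three-point property of the prox; the
   minibatch estimator has variance at most (L^2/b) times the table term,
   and each table entry is refreshed with probability at least b/(2n), so
   the table term contracts by the factor 1 - b/(4n).  The step-size
   condition 16 n^2 rho^2 / b^3 + rho <= 1 is exactly what makes the
   coefficient of ||x^{t+1} - x^t||^2 nonpositive.  Telescoping and
   Phi >= min F then give the bound, even without the factor 1/(1 - 2 rho). *)

From Stdlib Require Import Reals Lra Psatz FunctionalExtensionality.
From HB Require Import structures.
From mathcomp Require Import all_boot.
Open Scope R_scope.

HB.instance Definition _ := Monoid.isComLaw.Build R R0 Rplus
  (fun a b c => esym (Rplus_assoc a b c)) Rplus_comm Rplus_0_l.

Lemma iter_Rplus k c : iter k (Rplus c) R0 = INR k * c.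
Proof. elim: k => [|k IH]; [rewrite /=; lra | rewrite S_INR /= IH; lra]. Qed.

Section RealSums.
Context {I : finType}.
Implicit Types (F G : I -> R) (c : R).

Lemma sumRD F G :
  \big[Rplus/R0]_i (F i + G i) = \big[Rplus/R0]_i F i + \big[Rplus/R0]_i G i.
Proof. exact: big_split. Qed.

Lemma sumRB F G :
  \big[Rplus/R0]_i (F i - G i) = \big[Rplus/R0]_i F i - \big[Rplus/R0]_i G i.
Proof. by elim/big_rec3: _ => [|i y1 y2 y3 _ ->]; lra. Qed.

Lemma mulR_sumr c F : c * \big[Rplus/R0]_i F i = \big[Rplus/R0]_i (c * F i).
Proof. by elim/big_rec2: _ => [|i y1 y2 _ <-]; lra. Qed.

Lemma mulR_suml c F : (\big[Rplus/R0]_i F i) * c = \big[Rplus/R0]_i (F i * c).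
Proof. by elim/big_rec2: _ => [|i y1 y2 _ <-]; lra. Qed.

Lemma leR_sum F G :
  (forall i, F i <= G i) -> \big[Rplus/R0]_i F i <= \big[Rplus/R0]_i G i.
Proof. by move=> FG; elim/big_rec2: _ => [|i y1 y2 _]; [lra | have := FG i; lra]. Qed.

Lemma sumR_ge0 F : (forall i, 0 <= F i) -> 0 <= \big[Rplus/R0]_i F i.
Proof. by move=> F0; elim/big_rec: _ => [|i y _]; [lra | have := F0 i; lra]. Qed.

Lemma sumR_const c : \big[Rplus/R0]_(i : I) c = INR #|I| * c.
Proof. by rewrite big_const iter_Rplus. Qed.

Lemma sumR_if (a : pred I) (A B : R) :
  \big[Rplus/R0]_i (if a i then A else B) = INR #|I| * A + INR #|[predC a]| * (B - A).
Proof.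
transitivity (INR #|a| * A + INR #|[predC a]| * B); last first.
  by rewrite -(cardC a) plus_INR; ring.
rewrite (bigID a) /= (eq_bigr (fun _ => A)); last by move=> i ->.
rewrite [X in _ + X](eq_bigr (fun _ => B)); last by move=> i /negbTE ->.
have -> : \big[Rplus/R0]_(i | a i) A = \big[Rplus/R0]_(i in a) A by apply: eq_bigl.
have -> : \big[Rplus/R0]_(i | ~~ a i) B = \big[Rplus/R0]_(i in [predC a]) B
  by apply: eq_bigl => i; rewrite !inE.
by rewrite !big_const !iter_Rplus.
Qed.

End RealSums.

Ltac by_coordinates := rewrite /norm2 /dot /vsub /vadd /vscal /Rdiv;
  do 6 (rewrite ?mulR_sumr ?mulR_suml -?sumRB -?sumRD);
  apply: eq_bigr => ? _.

Section VectorAlgebra.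
Context {d : nat}.
Implicit Types (x y z : vec d) (a : R).

Lemma norm2_ge0 x : 0 <= norm2 x.
Proof. by apply: sumR_ge0 => i; nra. Qed.

Lemma norm_ge0 x : 0 <= norm x.
Proof. exact: sqrt_pos. Qed.

Lemma norm_sq x : norm x ^ 2 = norm2 x.
Proof. by rewrite /norm /= Rmult_1_r sqrt_sqrt //; apply: norm2_ge0. Qed.

Lemma norm2_scal a x : norm2 (vscal a x) = a ^ 2 * norm2 x.
Proof. by rewrite /norm2 /dot mulR_sumr; apply: eq_bigr => i _; rewrite /vscal; ring. Qed.

Lemma norm_scal a x : norm (vscal a x) = Rabs a * norm x.
Proof.
rewrite /norm norm2_scal sqrt_mult_alt; last by nra.
by rewrite /= Rmult_1_r sqrt_Rsqr_abs.
Qed.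

Lemma norm2_le_of_norm_le x y c :
  0 <= c -> norm x <= c * norm y -> norm2 x <= c ^ 2 * norm2 y.
Proof.
move=> c0 le_xy; rewrite -!norm_sq -Rpow_mult_distr.
by apply: pow_incr; split; [apply: norm_ge0 | exact: le_xy].
Qed.

Lemma vadd_scal0 x y : vadd x (vscal 0 y) = x.
Proof. by apply: functional_extensionality => i; rewrite /vadd /vscal; ring. Qed.

Lemma vadd_scal1_sub x y : vadd x (vscal 1 (vsub y x)) = y.
Proof. by apply: functional_extensionality => i; rewrite /vadd /vscal /vsub; ring. Qed.

Lemma vsub_addl x y : vsub (vadd x y) x = y.
Proof. by apply: functional_extensionality => i; rewrite /vsub /vadd; ring. Qed.

Lemma dotZr x y a : dot x (vscal a y) = a * dot x y.
Proof. by rewrite /dot mulR_sumr; apply: eq_bigr => i _; rewrite /vscal; ring. Qed.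

Lemma dotBl x y z : dot (vsub x y) z = dot x z - dot y z.
Proof. by rewrite /dot -sumRB; apply: eq_bigr => i _; rewrite /vsub; ring. Qed.


Lemma dot_le_young x y lam :
  0 < lam -> 2 * dot x y <= norm2 x / lam + lam * norm2 y.
Proof.
move=> lam0; have := norm2_ge0 (vsub x (vscal lam y)).
have -> : norm2 (vsub x (vscal lam y)) =
  norm2 x - 2 * lam * dot x y + lam ^ 2 * norm2 y by by_coordinates; ring.
move=> sq_ge0; apply: (Rmult_le_reg_l lam) => //.
have -> : lam * (norm2 x / lam + lam * norm2 y) = norm2 x + lam ^ 2 * norm2 y
  by field; lra.
nra.
Qed.
End VectorAlgebra.

Section Smoothness.
Context {d : nat}.
Implicit Types (x y : vec d).

Lemma derivable_pt_lim_line (f : vec d -> R) g x u t : is_gradient f g ->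
  derivable_pt_lim (fun s => f (vadd x (vscal s u))) t (dot (g (vadd x (vscal t u))) u).
Proof.
move=> grad_f eps eps0; set z := vadd x (vscal t u).
have u0 := norm_ge0 u; have [M uM] : exists M, norm u < M by exists (norm u + 1); lra.
have [del [del0 Hdel]] := grad_f z (eps / (2 * M)) ltac:(apply: Rdiv_lt_0_compat; lra).
have delM0 : 0 < del / M by apply: Rdiv_lt_0_compat; lra.
exists (mkposreal _ delM0) => s s0 /= s_small.
have -> : vadd x (vscal (t + s) u) = vadd z (vscal s u).
  by apply: functional_extensionality => i; rewrite /z /vadd /vscal; ring.
have s_pos : 0 < Rabs s by apply: Rabs_pos_lt.
have sM : Rabs s * M < del.
  by have := Rmult_lt_compat_r M _ _ ltac:(lra) s_small; rewrite /Rdiv Rmult_assoc Rinv_l; lra.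
have su_small : Rabs s * norm u < del by nra.
have := Hdel (vadd z (vscal s u)); rewrite vsub_addl norm_scal dotZr => /(_ su_small) err.
set a := f (vadd z (vscal s u)) - f z in err *.
have -> : a / s - dot (g z) u = (a - s * dot (g z) u) / s by field.
rewrite /Rdiv Rabs_mult Rabs_inv; apply: (Rmult_lt_reg_r (Rabs s)) => //.
rewrite Rmult_assoc Rinv_l ?Rmult_1_r; last lra.
have : eps / (2 * M) * (Rabs s * norm u) < eps * Rabs s.
  have -> : eps / (2 * M) * (Rabs s * norm u) = eps * Rabs s * (norm u / (2 * M))
    by field; lra.
  have : norm u / (2 * M) < 1.
    apply: (Rmult_lt_reg_r (2 * M)); first lra.
    by rewrite /Rdiv Rmult_assoc Rinv_l; lra.
  have := Rmult_lt_0_compat _ _ eps0 s_pos; nra.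
lra.
Qed.

Lemma derivable_pt_lim_quadratic A K t :
  derivable_pt_lim (fun s => A * s + K * (s * s)) t (A + K * (2 * t)).
Proof.
have := derivable_pt_lim_plus (mult_real_fct A id) (mult_real_fct K (id * id)%F) t _ _
  (derivable_pt_lim_scal id A t _ (derivable_pt_lim_id t))
  (derivable_pt_lim_scal _ K t _
    (derivable_pt_lim_mult id id t _ _ (derivable_pt_lim_id t) (derivable_pt_lim_id t))).
by have -> : A * 1 + K * (1 * id t + id t * 1) = A + K * (2 * t) by rewrite /id; ring.
Qed.

(* Mean value theorem applied to s |-> f(x + s(y - x)) - (A s + K s^2), whose
   derivative is nonpositive on [0, 1] by the Lipschitz bound and Young. *)
Lemma smooth_descent (f : vec d -> R) g L : is_gradient f g -> 0 < L ->
  (forall x y, norm (vsub (g x) (g y)) <= L * norm (vsub x y)) ->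
  forall x y, f y <= f x + dot (g x) (vsub y x) + L / 2 * norm2 (vsub y x).
Proof.
move=> grad_f L0 lip_g x y; set u := vsub y x.
set A := dot (g x) u; set K := L / 2 * norm2 u.
pose psi s := f (vadd x (vscal s u)) - (A * s + K * (s * s)).
pose psi' s := dot (g (vadd x (vscal s u))) u - (A + K * (2 * s)).
have dpsi c : 0 <= c <= 1 -> derivable_pt_lim psi c (psi' c).
  move=> _; apply: derivable_pt_lim_minus.
  - exact: derivable_pt_lim_line.
  - exact: derivable_pt_lim_quadratic.
have [c [psi_mvt c01]] := MVT_cor2 psi psi' 0 1 Rlt_0_1 dpsi.
have psi'_le0 : psi' c <= 0.
  set w := vsub (g (vadd x (vscal c u))) (g x).
  have w_le : norm2 w <= (L * c) ^ 2 * norm2 u.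
    apply: norm2_le_of_norm_le; first nra.
    have -> : L * c * norm u = L * norm (vsub (vadd x (vscal c u)) x).
      by rewrite vsub_addl norm_scal Rabs_pos_eq; lra.
    exact: lip_g.
  have := dot_le_young w u (L * c) ltac:(nra).
  have : norm2 w / (L * c) <= L * c * norm2 u.
    apply: (Rmult_le_reg_l (L * c)); first nra.
    have -> : L * c * (norm2 w / (L * c)) = norm2 w by field; nra.
    nra.
  rewrite /psi' /A /K /w dotBl; have := norm2_ge0 u; nra.
rewrite /psi vadd_scal0 vadd_scal1_sub in psi_mvt; nra.
Qed.
End Smoothness.

Lemma Rle_of_le_add_small a b K :
  0 <= K -> (forall lam, 0 < lam <= 1 -> a <= b + lam * K) -> a <= b.
Proof.
move=> K0 small; apply: Rnot_lt_le => ba; set e := a - b.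
have e0 : 0 < e by rewrite /e; lra.
set lam := e / (K + e).
have lamKe : lam * (K + e) = e by rewrite /lam; field; lra.
have lam0 : 0 < lam by apply: Rdiv_lt_0_compat; lra.
have lam1 : lam <= 1 by apply: Rnot_lt_le => lam1; nra.
have := small lam (conj lam0 lam1); rewrite /e in lamKe; nra.
Qed.

Section Prox.
Context {d : nat}.
Variables (D : vec d -> Prop) (h : vec d -> R) (eta : R) (px : vec d -> vec d).
Hypotheses (h_conv : ext_convex D h) (prox_px : is_prox D h eta px) (eta0 : 0 < eta).

(* The prox objective is (1/eta)-strongly convex, so its minimiser beats every
   point z of the domain by the extra term ||z - px u||^2 / (2 eta). *)
Lemma prox_three_point u z : D z ->
  h (px u) + norm2 (vsub (px u) u) / (2 * eta) + norm2 (vsub z (px u)) / (2 * eta)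
  <= h z + norm2 (vsub z u) / (2 * eta).
Proof.
move=> Dz; have [Dp p_min] := prox_px u; set p := px u in Dp p_min *.
set Dt := dot (vsub p u) (vsub z p); set Nz := norm2 (vsub z p).
have Nz0 : 0 <= Nz := norm2_ge0 _.
have hp_le : h p <= h z + Dt / eta.
  apply: (Rle_of_le_add_small _ _ (Nz / (2 * eta))) => [|lam lam01].
    by apply: Rmult_le_pos => //; apply/Rlt_le/Rinv_0_lt_compat; lra.
  have [Dy hy_le] := h_conv z p lam Dz Dp ltac:(lra).
  have := p_min _ Dy.
  have -> : norm2 (vsub (vadd (vscal lam z) (vscal (1 - lam) p)) u) =
    norm2 (vsub p u) + 2 * lam * Dt + lam ^ 2 * Nz by rewrite /Dt /Nz; by_coordinates; ring.
  have -> : (norm2 (vsub p u) + 2 * lam * Dt + lam ^ 2 * Nz) / (2 * eta) =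
    norm2 (vsub p u) / (2 * eta) + lam * (Dt / eta + lam * (Nz / (2 * eta))) by field; lra.
  move=> p_le; apply: (Rmult_le_reg_l lam); lra.
have -> : norm2 (vsub z u) / (2 * eta) =
  norm2 (vsub p u) / (2 * eta) + Dt / eta + Nz / (2 * eta).
  by rewrite /Nz /Dt; by_coordinates; field; lra.
lra.
Qed.

(* Compare y with the exact proximal gradient point xb: the descent inequality,
   the three-point property at (x, xb) and at (xb, y), and a completed square. *)
Lemma prox_step_le (fA : vec d -> R) (gA : vec d -> vec d) L x v :
  (forall x y, fA y <= fA x + dot (gA x) (vsub y x) + L / 2 * norm2 (vsub y x)) ->
  D x ->
  let y := px (vsub x (vscal eta v)) in
  fA y + h y <= fA x + h x + eta / 2 * norm2 (vsub (gA x) v)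
     + (L / 2 - 1 / (2 * eta)) * norm2 (vsub y x)
     - eta / 2 * norm2 (vscal (/ eta) (vsub x (px (vsub x (vscal eta (gA x)))))).
Proof.
move=> descent_fA Dx y; set u := vsub x (vscal eta v); set g := gA x.
set ub := vsub x (vscal eta g); set xb := px ub.
have Dxb : D xb by case: (prox_px ub).
have three_x := prox_three_point ub x Dx; rewrite -/xb in three_x.
have three_xb := prox_three_point u xb Dxb; rewrite -/y in three_xb.
have := descent_fA x y; rewrite -/g => descent_xy.
have sq0 : 0 <= norm2 (vsub (vsub y xb) (vscal eta (vsub g v))) / (2 * eta).
  by apply: Rmult_le_pos; [apply: norm2_ge0 | apply/Rlt_le/Rinv_0_lt_compat; lra].
have : norm2 (vsub xb u) / (2 * eta) - norm2 (vsub y u) / (2 * eta)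
   - norm2 (vsub xb y) / (2 * eta) + norm2 (vsub x ub) / (2 * eta)
   - norm2 (vsub xb ub) / (2 * eta) - norm2 (vsub x xb) / (2 * eta) + dot g (vsub y x)
   = eta / 2 * norm2 (vsub g v) - norm2 (vsub y x) / (2 * eta)
     - eta / 2 * ((/ eta) ^ 2 * norm2 (vsub x xb))
     - norm2 (vsub (vsub y xb) (vscal eta (vsub g v))) / (2 * eta).
  by rewrite /u /ub; by_coordinates; field; lra.
rewrite norm2_scal.
have -> : (L / 2 - 1 / (2 * eta)) * norm2 (vsub y x) =
  L / 2 * norm2 (vsub y x) - norm2 (vsub y x) / (2 * eta) by field; lra.
lra.
Qed.
End Prox.

Section FinfunSnoc.
Context {X : finType} {m : nat}.

Definition ffun_snoc (g : {ffun 'I_m -> X}) (x : X) : {ffun 'I_m.+1 -> X} :=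
  [ffun k => if unlift ord_max k is Some k' then g k' else x].

Lemma ffun_snoc_widen g x (k : 'I_m) : ffun_snoc g x (widen_ord (leqnSn m) k) = g k.
Proof.
have -> : widen_ord (leqnSn m) k = lift ord_max k.
  by apply: val_inj; rewrite /= /bump leqNgt ltn_ord.
by rewrite ffunE liftK.
Qed.

Lemma ffun_snoc_max g x : ffun_snoc g x ord_max = x.
Proof. by rewrite ffunE unlift_none. Qed.

Lemma sumR_ffunS (G : {ffun 'I_m.+1 -> X} -> R) :
  \big[Rplus/R0]_F G F = \big[Rplus/R0]_g \big[Rplus/R0]_x G (ffun_snoc g x).
Proof.
rewrite pair_big /= (reindex (fun p => ffun_snoc p.1 p.2)) //.
exists (fun F : {ffun 'I_m.+1 -> X} => ([ffun k : 'I_m => F (lift ord_max k)], F ord_max)).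
- move=> [g x] _ /=; congr pair; last exact: ffun_snoc_max.
  by apply/ffunP => k; rewrite !ffunE liftK.
- move=> F _; apply/ffunP => k; rewrite ffunE.
  by case: unliftP => [k' ->|->]; rewrite ?ffunE.
Qed.
End FinfunSnoc.

Lemma INR_ge1 {m} : (1 <= m)%N -> 1 <= INR m.
Proof. by move=> m1; apply: (le_INR 1); apply/leP. Qed.

Lemma INR_expn m k : INR (m ^ k)%N = INR m ^ k.
Proof. by elim: k => [|k IH] //=; rewrite expnS mult_INR IH. Qed.

Notation batch n b := {ffun 'I_b -> 'I_n}.

Lemma sumR_batch_const n b c : \big[Rplus/R0]_(J : batch n b) c = INR n ^ b * c.
Proof. by rewrite sumR_const card_ffun !card_ord INR_expn. Qed.

(* For centred weights the cross terms vanish: the sum of b independent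
   uniform samples has second moment b times that of a single sample. *)
Lemma sum_batch_sq_centered {n} (w : 'I_n -> R) b : \big[Rplus/R0]_i w i = 0 ->
  INR n * \big[Rplus/R0]_(I : batch n b)
    ((\big[Rplus/R0]_(k < b) w (I k)) * (\big[Rplus/R0]_(k < b) w (I k)))
  = INR b * INR n ^ b * \big[Rplus/R0]_i (w i * w i).
Proof.
move=> w0; elim: b => [|b IH].
  rewrite [X in INR n * X](eq_bigr (fun _ => 0)); last by move=> I _; rewrite big_ord0 /=; ring.
  by rewrite sumR_const /=; ring.
have snoc_sq (g : batch n b) :
  \big[Rplus/R0]_j ((\big[Rplus/R0]_(k < b.+1) w (ffun_snoc g j k))
                    * (\big[Rplus/R0]_(k < b.+1) w (ffun_snoc g j k))) =
  INR n * ((\big[Rplus/R0]_(k < b) w (g k)) * (\big[Rplus/R0]_(k < b) w (g k)))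
  + \big[Rplus/R0]_i (w i * w i).
  set Sg := \big[Rplus/R0]_(k < b) w (g k).
  rewrite (eq_bigr (fun j => Sg * Sg + 2 * Sg * w j + w j * w j)); last first.
    move=> j _; rewrite big_ord_recr /= ffun_snoc_max (eq_bigr (fun k => w (g k))).
      by rewrite -/Sg; ring.
    by move=> k _; rewrite ffun_snoc_widen.
  by rewrite !sumRD -(mulR_sumr (2 * Sg)) w0 sumR_const card_ord; ring.
rewrite sumR_ffunS (eq_bigr _ (fun g _ => snoc_sq g)) sumRD -mulR_sumr sumR_batch_const.
rewrite Rmult_plus_distr_l -Rmult_assoc (Rmult_comm (INR n)) Rmult_assoc IH S_INR /=.
ring.
Qed.

Lemma sum_batch_norm2_centered {n d} b (Y : 'I_n -> vec d) :
  (forall j, \big[Rplus/R0]_i Y i j = 0) ->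
  INR n * \big[Rplus/R0]_(I : batch n b) norm2 (vsum (fun k : 'I_b => Y (I k)))
  = INR b * INR n ^ b * \big[Rplus/R0]_i norm2 (Y i).
Proof.
move=> Y0; rewrite /norm2 /dot /vsum.
rewrite [X in INR n * X]exchange_big [X in _ = _ * X]exchange_big /=.
rewrite mulR_sumr [in RHS]mulR_sumr; apply: eq_bigr => j _.
exact: sum_batch_sq_centered.
Qed.

Lemma sum_sq_centered_le {n} (z : 'I_n -> R) : (0 < n)%N ->
  \big[Rplus/R0]_i ((z i - / INR n * \big[Rplus/R0]_k z k) * (z i - / INR n * \big[Rplus/R0]_k z k))
  <= \big[Rplus/R0]_i (z i * z i).
Proof.
move=> n0; have n0' : 0 < INR n by apply/lt_0_INR/ltP.
set mu := / INR n * \big[Rplus/R0]_k z k.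
have sum_mu : \big[Rplus/R0]_k z k = INR n * mu by rewrite /mu; field; lra.
rewrite (eq_bigr (fun i => z i * z i - 2 * mu * z i + mu * mu)); last by move=> i _; ring.
rewrite sumRD sumRB -mulR_sumr sumR_const card_ord sum_mu.
have : 0 <= INR n * (mu * mu) by nra.
lra.
Qed.

Lemma pow_1m_le a b : 0 <= a <= 1 -> INR b * a <= 1 -> (1 - a) ^ b <= 1 - INR b * a / 2.
Proof.
move=> a01 ba1.
have bernoulli k : INR k * a <= 1 -> (1 - a) ^ k * (1 + INR k * a) <= 1.
  elim: k => [|k IH]; first by rewrite /=; lra.
  rewrite S_INR /= => ka1; have k0 := pos_INR k.
  have := IH ltac:(nra); have : 0 <= (1 - a) ^ k by apply: pow_le; lra.
  have : (1 - a) * (1 + (INR k + 1) * a) <= 1 + INR k * a by nra.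
  nra.
have := bernoulli b ba1; have : 0 <= (1 - a) ^ b by apply: pow_le; lra.
have : 0 <= INR b * a by have := pos_INR b; nra.
set P := (1 - a) ^ b; set y := INR b * a in ba1 * => y0 P0 Py.
have : (P - (1 - y / 2)) * (1 + y) <= 0 by nra.
move=> le0; apply: Rnot_lt_le => Pgt.
have : 0 < (P - (1 - y / 2)) * (1 + y) by apply: Rmult_lt_0_compat; lra.
lra.
Qed.

Lemma card_batch_avoid n b (i : 'I_n) :
  #|[predC (fun J : batch n b => [exists k, J k == i])]| = (n.-1 ^ b)%N.
Proof.
have := @card_ffun_on 'I_b 'I_n (predC1 i); rewrite cardC1 !card_ord => <-.
apply: eq_card => J; rewrite !inE negb_exists.
by apply/forallP/ffun_onP => J_i k; have := J_i k; rewrite !inE.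
Qed.

Lemma avg_batch_hit n b (i : 'I_n) (A B : R) : (1 <= n)%N ->
  / INR n ^ b * \big[Rplus/R0]_(J : batch n b) (if [exists k, J k == i] then A else B)
  = (1 - (1 - / INR n) ^ b) * A + (1 - / INR n) ^ b * B.
Proof.
move=> n_gt0; have n1 := INR_ge1 n_gt0.
rewrite sumR_if card_batch_avoid card_ffun !card_ord !INR_expn.
have -> : INR n.-1 = INR n * (1 - / INR n).
  have -> : INR n = INR n.-1 + 1 by rewrite -S_INR prednK.
  field; have := pos_INR n.-1; lra.
rewrite Rpow_mult_distr; field; apply: pow_nonzero; lra.
Qed.

Section DrawExpectation.
Context {n b : nat}.
Hypothesis n_gt0 : (1 <= n)%N.
Implicit Types (G H : (nat -> option (draw n b)) -> R).

Definition avg_draw (G : draw n b -> R) : R :=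
  / INR #|{: draw n b}| * \big[Rplus/R0]_(dl : draw n b) G dl.

Definition set_draw (w : nat -> option (draw n b)) t dl : nat -> option (draw n b) :=
  fun s => if s == t then Some dl else w s.

(* Expectation of G over the first t draws, all later draws being absent. *)
Fixpoint Edraws t G : R :=
  match t with
  | O => G (fun _ => None)
  | S t' => Edraws t' (fun w => avg_draw (fun dl => G (set_draw w t' dl)))
  end.

Lemma card_draw_gt0 : 0 < INR #|{: draw n b}|.
Proof.
apply/lt_0_INR/ltP.
by rewrite card_prod card_ffun !card_ord muln_gt0 expn_gt0 n_gt0.
Qed.

Lemma avg_draw_const c : avg_draw (fun _ => c) = c.
Proof.
rewrite /avg_draw sumR_const -Rmult_assoc Rinv_l ?Rmult_1_l //.
exact/Rgt_not_eq/card_draw_gt0.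
Qed.

Lemma avg_drawD (G H : draw n b -> R) :
  avg_draw (fun dl => G dl + H dl) = avg_draw G + avg_draw H.
Proof. by rewrite /avg_draw sumRD Rmult_plus_distr_l. Qed.

Lemma avg_drawZ c (G : draw n b -> R) : avg_draw (fun dl => c * G dl) = c * avg_draw G.
Proof. by rewrite /avg_draw -mulR_sumr -!Rmult_assoc (Rmult_comm c). Qed.

Lemma le_avg_draw (G H : draw n b -> R) :
  (forall dl, G dl <= H dl) -> avg_draw G <= avg_draw H.
Proof.
move=> GH; apply: Rmult_le_compat_l; last exact: leR_sum.
by apply/Rlt_le/Rinv_0_lt_compat/card_draw_gt0.
Qed.

Lemma avg_draw_pair (G : draw n b -> R) : avg_draw G =
  / INR n ^ b * \big[Rplus/R0]_(I : batch n b)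
    (/ INR n ^ b * \big[Rplus/R0]_(J : batch n b) G (I, J)).
Proof.
rewrite /avg_draw.
have -> : \big[Rplus/R0]_(dl : draw n b) G dl
    = \big[Rplus/R0]_(I : batch n b) \big[Rplus/R0]_(J : batch n b) G (I, J).
  by rewrite pair_bigA; apply: eq_bigr => [[I J]].
rewrite -mulR_sumr -Rmult_assoc -Rinv_mult.
by rewrite card_prod card_ffun !card_ord mult_INR INR_expn.
Qed.

Lemma Edraws_ext t G H : (forall w, G w = H w) -> Edraws t G = Edraws t H.
Proof. by move=> GH; rewrite (functional_extensionality _ _ GH). Qed.

Lemma Edraws_const t c : Edraws t (fun _ => c) = c.
Proof.
elim: t c => [|t IH] c //=.
by rewrite (Edraws_ext _ _ _ (fun w => avg_draw_const c)) IH.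
Qed.

Lemma EdrawsD t G H : Edraws t (fun w => G w + H w) = Edraws t G + Edraws t H.
Proof.
elim: t G H => [|t IH] G H //=.
by rewrite -IH; apply: Edraws_ext => w; rewrite avg_drawD.
Qed.

Lemma EdrawsZ t c G : Edraws t (fun w => c * G w) = c * Edraws t G.
Proof.
elim: t G => [|t IH] G //=.
by rewrite -IH; apply: Edraws_ext => w; rewrite avg_drawZ.
Qed.

Lemma le_Edraws t G H : (forall w, G w <= H w) -> Edraws t G <= Edraws t H.
Proof. by elim: t G H => [|t IH] G H GH //=; apply: IH => w; apply: le_avg_draw. Qed.

Lemma EdrawsS_indep t G :
  (forall w dl, G (set_draw w t dl) = G w) -> Edraws t.+1 G = Edraws t G.
Proof.
move=> G_indep /=; apply: Edraws_ext => w.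
rewrite -[RHS](avg_draw_const (G w)); congr avg_draw.
by apply: functional_extensionality => dl; apply: G_indep.
Qed.
End DrawExpectation.

Section SagaState.
Context {n d : nat}.
Variables (gf : 'I_n -> vec d -> vec d) (b : nat) (px : vec d -> vec d) (eta : R)
  (x0 : vec d).
Hypothesis n_gt0 : (1 <= n)%N.

Definition saga_estimator (x : vec d) (al : 'I_n -> vec d) (I : batch n b) : vec d :=
  vadd (vscal (/ INR b) (vsum (fun k : 'I_b => vsub (gf (I k) x) (gf (I k) (al (I k))))))
       (vscal (/ INR n) (vsum (fun i : 'I_n => gf i (al i)))).

Definition saga_step (s : vec d * ('I_n -> vec d)) (o : option (draw n b)) :=
  let (x, al) := s in
  match o with
  | None => (x, al)
  | Some (Is, Js) => (px (vsub x (vscal eta (saga_estimator x al Is))),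
                      fun j => if [exists k, Js k == j] then x else al j)
  end.

Local Notation state w t := (@saga_state n d gf b px eta x0 w t).

Lemma saga_stateS w t : state w t.+1 = saga_step (state w t) (w t).
Proof. by []. Qed.

Lemma saga_state_set_draw w t dl a : (a <= t)%N -> state (set_draw w t dl) a = state w a.
Proof.
elim: a => [|a IH] a_le //; rewrite !saga_stateS IH; last exact: ltnW.
by rewrite /set_draw (_ : (a == t) = false) //; apply/eqP => a_t; rewrite a_t ltnn in a_le.
Qed.

Lemma Edraws_saga_state a T (g : vec d * ('I_n -> vec d) -> R) : (a <= T)%N ->
  Edraws T (fun w => g (state w a)) = Edraws a (fun w => g (state w a)).
Proof.
elim: T => [|T IH] a_le; first by move: a_le; rewrite leqn0 => /eqP ->.
case: (ltngtP a T.+1) => [a_lt|a_gt|<-] //; last by rewrite ltnNge a_le in a_gt.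
rewrite EdrawsS_indep //; first exact: IH.
by move=> w dl; rewrite saga_state_set_draw.
Qed.

Lemma Edraws_saga_stateS t (g : vec d * ('I_n -> vec d) -> R) :
  Edraws t.+1 (fun w => g (state w t.+1))
  = Edraws t (fun w => avg_draw (fun dl => g (saga_step (state w t) (Some dl)))).
Proof.
rewrite [LHS]/=; apply: Edraws_ext => w; congr avg_draw; apply: functional_extensionality => dl.
by rewrite /= saga_state_set_draw // /set_draw eqxx.
Qed.
End SagaState.

Section SampleSpace.
Context {n b : nat}.
Hypothesis n_gt0 : (1 <= n)%N.

Lemma draws_of_snoc T (g : sample_space n b T) (dl : draw n b) :
  draws_of (ffun_snoc g dl : sample_space n b T.+1) = set_draw (draws_of g) T dl.
Proof.
apply: functional_extensionality => s; rewrite /draws_of /set_draw.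
case: (ltngtP s T) => s_T.
- have s_T1 : (s < T.+1)%N by apply: ltnW.
  rewrite (insubT (fun x => x < T.+1)%N s_T1) (insubT (fun x => x < T)%N s_T).
  have -> : (Sub s s_T1 : 'I_T.+1) = widen_ord (leqnSn T) (Sub s s_T) by apply: val_inj.
  by rewrite ffun_snoc_widen.
- rewrite (@insubF _ (fun x => x < T.+1)%N 'I_T.+1 s) ?(@insubF _ (fun x => x < T)%N 'I_T s) //.
  + by apply/negbTE; rewrite -leqNgt ltnW.
  + by apply/negbTE; rewrite -leqNgt.
- subst s; rewrite (insubT (fun x => x < T.+1)%N (ltnSn T)).
  have -> : (Sub T (ltnSn T) : 'I_T.+1) = ord_max by apply: val_inj.
  by rewrite ffun_snoc_max.
Qed.

Lemma sum_sample_space T (G : (nat -> option (draw n b)) -> R) :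
  \big[Rplus/R0]_(om : sample_space n b T) G (draws_of om)
  = INR #|{: draw n b}| ^ T * Edraws T G.
Proof.
elim: T G => [|T IH] G.
  have draws_of0 (om : sample_space n b 0) : draws_of om = fun _ => None.
    apply: functional_extensionality => s; rewrite /draws_of.
    by case: insubP => // [[u u_lt]].
  rewrite (eq_bigr (fun _ => G (fun _ => None))); last by move=> om _; rewrite draws_of0.
  by rewrite sumR_const /sample_space card_ffun card_ord expn0 /=; ring.
rewrite /sample_space sumR_ffunS.
rewrite (eq_bigr (fun g => INR #|{: draw n b}| *
                   avg_draw (fun dl => G (set_draw (draws_of g) T dl)))); last first.
  move=> g _; rewrite /avg_draw -Rmult_assoc Rinv_r ?Rmult_1_l; last exact/Rgt_not_eq/card_draw_gt0.
  by apply: eq_bigr => dl _; rewrite draws_of_snoc.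
by rewrite -mulR_sumr (IH (fun w => avg_draw (fun dl => G (set_draw w T dl)))) /=; ring.
Qed.
End SampleSpace.

Lemma expected_sq_grad_map_Edraws {n d} (gf : 'I_n -> vec d -> vec d) b T px eta x0 :
  (1 <= n)%N -> (1 <= T)%N ->
  expected_sq_grad_map gf b T px eta x0 = / INR T * \big[Rplus/R0]_(a < T)
    Edraws a (fun w => norm2 (grad_map gf px eta (@saga_state n d gf b px eta x0 w a).1)).
Proof.
move=> n_gt0 T_gt0; set N := INR #|{: draw n b}| ^ T.
have N0 : 0 < N by apply/pow_lt/card_draw_gt0.
have card_sample : INR #|{: sample_space n b T}| = N.
  have := @sum_sample_space n b n_gt0 T (fun _ => 1).
  by rewrite (Edraws_const n_gt0) sumR_const !Rmult_1_r.
pose sq_grad a w := norm2 (grad_map gf px eta (@saga_state n d gf b px eta x0 w a).1).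
have sum_sq_grad (a : 'I_T) :
    \big[Rplus/R0]_(om : sample_space n b T) sq_grad a (draws_of om) = N * Edraws a (sq_grad a).
  rewrite (sum_sample_space n_gt0 T (sq_grad a)).
  rewrite (Edraws_saga_state gf b px eta x0 n_gt0 a T (fun s => norm2 (grad_map gf px eta s.1))) //.
  exact: ltnW.
rewrite /expected_sq_grad_map card_sample exchange_big /= (eq_bigr _ (fun a _ => sum_sq_grad a)).
rewrite -mulR_sumr Rinv_mult (Rmult_comm (/ N)) Rmult_assoc -(Rmult_assoc (/ N)).
by rewrite Rinv_l ?Rmult_1_l //; apply: Rgt_not_eq.
Qed.

Lemma refresh_mix_le r p A W X :
  0 < p <= 1 / 2 -> 0 <= r <= 1 - p -> 0 <= A -> 0 <= W ->
  X <= 2 * (1 - p) / p * A + p / (2 * (1 - p)) * W ->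
  (1 - r) * A + r * (A + X + W) <= 2 / p * A + (1 - p / 2) * W.
Proof.
move=> p01 r01 A0 W0 X_le.
have c1_0 : 0 <= 2 * (1 - p) / p by apply/Rlt_le/Rdiv_lt_0_compat; lra.
have c2_0 : 0 <= p / (2 * (1 - p)) by apply/Rlt_le/Rdiv_lt_0_compat; lra.
have -> : 2 / p * A = A + (1 - p) * (2 * (1 - p) / p * A) + (3 - 2 * p) * A by field; lra.
have -> : (1 - p / 2) * W = (1 - p) * W + (1 - p) * (p / (2 * (1 - p)) * W) by field; lra.
have : 0 <= (3 - 2 * p) * A by nra.
have : r * (2 * (1 - p) / p * A) <= (1 - p) * (2 * (1 - p) / p * A).
  by apply: Rmult_le_compat_r; [apply: Rmult_le_pos | lra].
have : r * (p / (2 * (1 - p)) * W) <= (1 - p) * (p / (2 * (1 - p)) * W).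
  by apply: Rmult_le_compat_r; [apply: Rmult_le_pos | lra].
have : r * X <= r * (2 * (1 - p) / p * A + p / (2 * (1 - p)) * W).
  by apply: Rmult_le_compat_l; lra.
have : r * W <= (1 - p) * W by apply: Rmult_le_compat_r; lra.
lra.
Qed.

Section Refresh.
Context {n d : nat}.
Variables (b : nat) (x y : vec d) (al : 'I_n -> vec d).
Hypotheses (n_gt0 : (1 <= n)%N) (b_gt0 : (1 <= b)%N) (b_le_n : (b <= n)%N).
Let p := INR b / (2 * INR n).

Lemma refresh_rate_bounds : 0 < p <= 1 / 2 /\ 0 <= (1 - / INR n) ^ b <= 1 - p.
Proof.
have n1 := INR_ge1 n_gt0.
have b1 := INR_ge1 b_gt0.
have bn : INR b <= INR n by apply/le_INR/leP.
split; first split.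
- by apply: Rdiv_lt_0_compat; lra.
- by apply: (Rmult_le_reg_r (2 * INR n)); rewrite /p /Rdiv ?Rmult_assoc ?Rinv_l; lra.
have inv_n : 0 <= / INR n <= 1.
  split; first by apply/Rlt_le/Rinv_0_lt_compat; lra.
  by rewrite -Rinv_1; apply: Rinv_le_contravar; lra.
split; first by apply: pow_le; lra.
have -> : p = INR b * / INR n / 2 by rewrite /p; field; lra.
apply: pow_1m_le => //.
by apply: (Rmult_le_reg_r (INR n)); rewrite ?Rmult_assoc ?Rinv_l; lra.
Qed.

(* Table entry i is replaced by x unless the batch misses i, which happens
   with probability at most 1 - b/(2n). *)
Lemma avg_refresh_dist_le (i : 'I_n) :
  / INR n ^ b * \big[Rplus/R0]_(J : batch n b)
     norm2 (vsub y (if [exists k, J k == i] then x else al i))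
  <= 2 / p * norm2 (vsub y x) + (1 - p / 2) * norm2 (vsub x (al i)).
Proof.
have [p01 q01] := refresh_rate_bounds.
rewrite (eq_bigr (fun J : batch n b => if [exists k, J k == i]
   then norm2 (vsub y x) else norm2 (vsub y (al i)))); last by move=> J _; case: ifP.
rewrite avg_batch_hit //.
have -> : norm2 (vsub y (al i)) = norm2 (vsub y x)
  + 2 * dot (vsub y x) (vsub x (al i)) + norm2 (vsub x (al i)) by by_coordinates; ring.
apply: refresh_mix_le => //; try exact: norm2_ge0.
have c0 : 0 < p / (2 * (1 - p)) by apply: Rdiv_lt_0_compat; lra.
have := dot_le_young (vsub y x) (vsub x (al i)) _ c0.
by have -> : norm2 (vsub y x) / (p / (2 * (1 - p))) = 2 * (1 - p) / p * norm2 (vsub y x)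
  by field; lra.
Qed.

Lemma avg_table_dist_le :
  / INR n ^ b * \big[Rplus/R0]_(J : batch n b)
     (/ INR n * \big[Rplus/R0]_i norm2 (vsub y (if [exists k, J k == i] then x else al i)))
  <= 2 / p * norm2 (vsub y x)
     + (1 - p / 2) * (/ INR n * \big[Rplus/R0]_i norm2 (vsub x (al i))).
Proof.
have n0 : 0 < INR n by apply/lt_0_INR/ltP.
have -> : / INR n ^ b * \big[Rplus/R0]_(J : batch n b)
     (/ INR n * \big[Rplus/R0]_i norm2 (vsub y (if [exists k, J k == i] then x else al i)))
   = / INR n * \big[Rplus/R0]_i (/ INR n ^ b * \big[Rplus/R0]_(J : batch n b)
     norm2 (vsub y (if [exists k, J k == i] then x else al i))).
  by rewrite -mulR_sumr -[in LHS]mulR_sumr exchange_big /= -!Rmult_assoc (Rmult_comm (/ INR n ^ b)).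
apply: Rle_trans.
  apply: Rmult_le_compat_l; first exact/Rlt_le/Rinv_0_lt_compat.
  by apply: leR_sum => i; apply: avg_refresh_dist_le.
rewrite sumRD sumR_const card_ord -mulR_sumr.
have [p01 _] := refresh_rate_bounds.
set S := \big[Rplus/R0]_i norm2 (vsub x (al i)); right; field; lra.
Qed.
End Refresh.

Definition centered {n d} (Z : 'I_n -> vec d) (i : 'I_n) : vec d :=
  vsub (Z i) (vscal (/ INR n) (vsum Z)).

Lemma sum_centered {n d} (Z : 'I_n -> vec d) j : (0 < n)%N ->
  \big[Rplus/R0]_i centered Z i j = 0.
Proof.
move=> n0; have := lt_0_INR n (ltP n0) => n0R.
by rewrite /centered /vsub sumRB sumR_const card_ord /vscal /vsum; field; lra.
Qed.

Lemma sum_norm2_centered_le {n d} (Z : 'I_n -> vec d) : (0 < n)%N ->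
  \big[Rplus/R0]_i norm2 (centered Z i) <= \big[Rplus/R0]_i norm2 (Z i).
Proof.
move=> n0; rewrite /norm2 /dot exchange_big [X in _ <= X]exchange_big /=.
by apply: leR_sum => j; apply: (sum_sq_centered_le (fun i => Z i j)).
Qed.

Section SagaEstimator.
Context {n d : nat}.
Variables (b : nat) (gf : 'I_n -> vec d -> vec d) (x : vec d) (al : 'I_n -> vec d).
Hypotheses (n_gt0 : (1 <= n)%N) (b_gt0 : (1 <= b)%N).

Let Z i := vsub (gf i x) (gf i (al i)).

(* The SAGA estimator is unbiased: its error is -1/b times a sum of b
   uniform samples of the centred differences Z. *)
Lemma saga_estimator_err (I : batch n b) :
  vsub (gavg gf x) (saga_estimator gf b x al I)
  = vscal (- / INR b) (vsum (fun k => centered Z (I k))).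
Proof.
have n1 := INR_ge1 n_gt0.
have b1 := INR_ge1 b_gt0.
apply: functional_extensionality => j.
rewrite /gavg /saga_estimator /centered /Z /vsub /vadd /vscal /vsum /=.
rewrite [X in - / INR b * X]sumRB sumR_const card_ord sumRB [X in _ * (/ INR n * X)]sumRB.
set Sx := \big[Rplus/R0]_(i < n) gf i x j; set Sa := \big[Rplus/R0]_(i < n) gf i (al i) j.
field; lra.
Qed.

Lemma avg_saga_estimator_err_le L :
  (forall i u w, norm2 (vsub (gf i u) (gf i w)) <= L ^ 2 * norm2 (vsub u w)) ->
  / INR n ^ b * \big[Rplus/R0]_(I : batch n b)
    norm2 (vsub (gavg gf x) (saga_estimator gf b x al I))
  <= L ^ 2 / INR b * (/ INR n * \big[Rplus/R0]_i norm2 (vsub x (al i))).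
Proof.
move=> lip_gf.
have n1 := INR_ge1 n_gt0.
have b1 := INR_ge1 b_gt0.
have nb0 : 0 < INR n ^ b by apply: pow_lt; lra.
have sum_Y_le : \big[Rplus/R0]_i norm2 (centered Z i)
    <= L ^ 2 * \big[Rplus/R0]_i norm2 (vsub x (al i)).
  apply: Rle_trans (sum_norm2_centered_le Z n_gt0) _.
  by rewrite mulR_sumr; apply: leR_sum => i; apply: lip_gf.
rewrite (eq_bigr (fun I : batch n b =>
   (/ INR b) ^ 2 * norm2 (vsum (fun k => centered Z (I k))))); last first.
  by move=> I _; rewrite saga_estimator_err norm2_scal; congr Rmult; ring.
have := sum_batch_norm2_centered b _ (fun j => sum_centered Z j n_gt0).
rewrite -mulR_sumr; set SY := \big[Rplus/R0]_(I : batch n b) _ => batch_eq.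
have -> : / INR n ^ b * ((/ INR b) ^ 2 * SY)
  = / INR b * (/ INR n * \big[Rplus/R0]_i norm2 (centered Z i)).
  have -> : SY = / INR n * (INR n * SY) by field; lra.
  by rewrite batch_eq; field; lra.
have -> : L ^ 2 / INR b * (/ INR n * \big[Rplus/R0]_i norm2 (vsub x (al i)))
  = / INR b * (/ INR n * (L ^ 2 * \big[Rplus/R0]_i norm2 (vsub x (al i)))) by field; lra.
by do 2 (apply: Rmult_le_compat_l; first by apply/Rlt_le/Rinv_0_lt_compat; lra).
Qed.
End SagaEstimator.

Lemma dot_gavg {n d} (gf : 'I_n -> vec d -> vec d) x w :
  dot (gavg gf x) w = / INR n * \big[Rplus/R0]_i dot (gf i x) w.
Proof.
rewrite /gavg /dot /vscal /vsum exchange_big /= mulR_sumr; apply: eq_bigr => k _.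
by rewrite Rmult_assoc mulR_suml.
Qed.

Lemma favg_smooth_descent {n d} (f : 'I_n -> vec d -> R) gf L : (1 <= n)%N -> 0 < L ->
  (forall i, is_gradient (f i) (gf i)) ->
  (forall i x y, norm (vsub (gf i x) (gf i y)) <= L * norm (vsub x y)) ->
  forall x y, favg f y <= favg f x + dot (gavg gf x) (vsub y x) + L / 2 * norm2 (vsub y x).
Proof.
move=> n_gt0 L0 grad_f lip_gf x y.
have n0 : 0 < INR n by apply/lt_0_INR/ltP.
have := leR_sum _ _ (fun i => smooth_descent _ _ _ (grad_f i) L0 (lip_gf i) x y).
rewrite !sumRD sumR_const card_ord => sum_le.
rewrite /favg dot_gavg.
have -> : L / 2 * norm2 (vsub y x) = / INR n * (INR n * (L / 2 * norm2 (vsub y x)))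
  by field; lra.
rewrite -!Rmult_plus_distr_l; apply: Rmult_le_compat_l => //.
exact/Rlt_le/Rinv_0_lt_compat.
Qed.

Section Lyapunov.
Context {n d : nat}.
Variables (b : nat) (f : 'I_n -> vec d -> R) (gf : 'I_n -> vec d -> vec d) (L : R)
  (D : vec d -> Prop) (h : vec d -> R) (rho : R) (px : vec d -> vec d).
Hypotheses (n_gt0 : (1 <= n)%N) (b_gt0 : (1 <= b)%N) (b_le_n : (b <= n)%N) (L_gt0 : 0 < L)
  (grad_f : forall i, is_gradient (f i) (gf i))
  (lip_gf : forall i x y, norm (vsub (gf i x) (gf i y)) <= L * norm (vsub x y))
  (h_conv : ext_convex D h) (rho_bounds : 0 < rho < 1 / 2)
  (rho_cond : 16 * INR n ^ 2 * rho ^ 2 / INR b ^ 3 + rho <= 1)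
  (prox_px : is_prox D h (rho / L) px).

Let eta := rho / L.
Let p := INR b / (2 * INR n).
(* c = 2 n eta L^2 / b^2 *)
Let c := eta * L ^ 2 / (INR b * p).

Definition table_dist (s : vec d * ('I_n -> vec d)) : R :=
  / INR n * \big[Rplus/R0]_i norm2 (vsub s.1 (s.2 i)).

Definition lyapunov (s : vec d * ('I_n -> vec d)) : R := favg f s.1 + h s.1 + c * table_dist s.

Lemma eta_gt0 : 0 < eta.
Proof. by apply: Rdiv_lt_0_compat; lra. Qed.

Lemma p_bounds : 0 < p <= 1 / 2.
Proof. by case: (refresh_rate_bounds b n_gt0 b_gt0 b_le_n). Qed.

Lemma c_ge0 : 0 <= c.
Proof.
have := eta_gt0; have := p_bounds; have := INR_ge1 b_gt0 => b1 p01 eta0.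
rewrite /c; apply/Rlt_le/Rdiv_lt_0_compat; last by nra.
by apply: Rmult_lt_0_compat => //; apply: pow_lt.
Qed.

Lemma lyapunov_coef_table : c * (1 - p / 2) + eta / 2 * (L ^ 2 / INR b) = c.
Proof.
have := eta_gt0; have := p_bounds; have := INR_ge1 b_gt0; rewrite /c => *.
by field; lra.
Qed.

Lemma lyapunov_coef_step : L / 2 - 1 / (2 * eta) + c * (2 / p) <= 0.
Proof.
have n1 := INR_ge1 n_gt0.
have := INR_ge1 b_gt0 => b1.
have -> : L / 2 - 1 / (2 * eta) + c * (2 / p)
  = L / (2 * rho) * (rho - 1 + 16 * INR n ^ 2 * rho ^ 2 / INR b ^ 3).
  by rewrite /c /p /eta; field; repeat split; lra.
have : 0 < L / (2 * rho) by apply: Rdiv_lt_0_compat; lra.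
nra.
Qed.

Lemma lyapunov_step_batch x al (I : batch n b) : D x ->
  / INR n ^ b * \big[Rplus/R0]_(J : batch n b)
    lyapunov (saga_step gf b px eta (x, al) (Some (I, J)))
  <= favg f x + h x + eta / 2 * norm2 (vsub (gavg gf x) (saga_estimator gf b x al I))
     - eta / 2 * norm2 (grad_map gf px eta x) + c * (1 - p / 2) * table_dist (x, al).
Proof.
move=> Dx; set v := saga_estimator gf b x al I; set y := px (vsub x (vscal eta v)).
have step_le : favg f y + h y <= favg f x + h x + eta / 2 * norm2 (vsub (gavg gf x) v)
    + (L / 2 - 1 / (2 * eta)) * norm2 (vsub y x) - eta / 2 * norm2 (grad_map gf px eta x)
  := prox_step_le D h eta px h_conv prox_px eta_gt0 (favg f) (gavg gf) L x v
       (favg_smooth_descent f gf L n_gt0 L_gt0 grad_f lip_gf) Dx.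
have table_le := avg_table_dist_le b x y al n_gt0 b_gt0 b_le_n.
rewrite -/p -/(table_dist (x, al)) in table_le.
rewrite (eq_bigr (fun J : batch n b => favg f y + h y + c * (/ INR n *
  \big[Rplus/R0]_i norm2 (vsub y (if [exists k, J k == i] then x else al i))))) //.
rewrite sumRD sumR_batch_const -mulR_sumr.
set TJ := \big[Rplus/R0]_(J : batch n b) _ in table_le *.
have nb0 : 0 < INR n ^ b by apply: pow_lt; apply/lt_0_INR/ltP.
have -> : / INR n ^ b * (INR n ^ b * (favg f y + h y) + c * TJ)
  = favg f y + h y + c * (/ INR n ^ b * TJ) by field; lra.
have := Rmult_le_compat_l _ _ _ c_ge0 table_le.
have := lyapunov_coef_step; have := norm2_ge0 (vsub y x); have := c_ge0.
nra.
Qed.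

Lemma lyapunov_decrease x al : D x ->
  avg_draw (fun dl => lyapunov (saga_step gf b px eta (x, al) (Some dl)))
  + eta / 2 * norm2 (grad_map gf px eta x) <= lyapunov (x, al).
Proof.
move=> Dx; set C := favg f x + h x - eta / 2 * norm2 (grad_map gf px eta x)
                    + c * (1 - p / 2) * table_dist (x, al).
have nb0 : 0 < / INR n ^ b by apply/Rinv_0_lt_compat/pow_lt/lt_0_INR/ltP.
have lip2_gf i u w : norm2 (vsub (gf i u) (gf i w)) <= L ^ 2 * norm2 (vsub u w).
  by apply: norm2_le_of_norm_le; [lra | apply: lip_gf].
have err_le := avg_saga_estimator_err_le b gf x al n_gt0 b_gt0 L lip2_gf.
rewrite -/(table_dist (x, al)) in err_le.
rewrite avg_draw_pair; apply: Rle_trans.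
  apply: Rplus_le_compat_r; apply: Rmult_le_compat_l; first lra.
  apply: (leR_sum _ (fun I => C + eta / 2 *
    norm2 (vsub (gavg gf x) (saga_estimator gf b x al I)))) => I.
  by apply: Rle_trans (lyapunov_step_batch x al I Dx) _; apply: Req_le; rewrite /C; ring.
rewrite sumRD sumR_batch_const -mulR_sumr.
set SE := \big[Rplus/R0]_(I : batch n b) _ in err_le *.
have -> : / INR n ^ b * (INR n ^ b * C + eta / 2 * SE) = C + eta / 2 * (/ INR n ^ b * SE).
  by field; apply: pow_nonzero; have := lt_0_INR n (ltP n_gt0); lra.
have half_eta : 0 <= eta / 2 by have := eta_gt0; lra.
have := Rmult_le_compat_l _ _ _ half_eta err_le.
have : c * (1 - p / 2) * table_dist (x, al) + eta / 2 * (L ^ 2 / INR b * table_dist (x, al))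
  = c * table_dist (x, al) by rewrite -{2}lyapunov_coef_table; ring.
rewrite /lyapunov /C /=; lra.
Qed.

Variables (x0 xstar : vec d).
Hypotheses (Dx0 : D x0)
  (xstar_min : forall y, D y -> favg f xstar + h xstar <= favg f y + h y).

Local Notation state w t := (@saga_state n d gf b px eta x0 w t).
Local Notation sq_grad_map s := (norm2 (grad_map gf px eta (fst s))).

Lemma saga_state_dom w t : D (state w t).1.
Proof.
elim: t => [|t IH] //; rewrite saga_stateS; move: IH; case: (state w t) => x al /= Dx.
case: (w t) => [[Is Js]|] //=.
by case: (prox_px (vsub x (vscal eta (saga_estimator gf b x al Is)))).
Qed.

Lemma lyapunov_ge_opt s : D s.1 -> favg f xstar + h xstar <= lyapunov s.
Proof.
move=> Ds; have := xstar_min _ Ds; have := c_ge0.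
have : 0 <= table_dist s.
  apply: Rmult_le_pos; last by apply: sumR_ge0 => i; apply: norm2_ge0.
  by apply/Rlt_le/Rinv_0_lt_compat/lt_0_INR/ltP.
rewrite /lyapunov; nra.
Qed.

Lemma lyapunov_init : lyapunov (x0, fun _ => x0) = favg f x0 + h x0.
Proof.
rewrite /lyapunov /table_dist /= (eq_bigr (fun _ => 0)).
  by rewrite sumR_const; ring.
by move=> i _; rewrite /norm2 /dot /vsub; apply: big1 => k _; ring.
Qed.

Lemma lyapunov_telescope t :
  Edraws t (fun w => lyapunov (state w t))
  + eta / 2 * \big[Rplus/R0]_(a < t) Edraws a (fun w => sq_grad_map (state w a))
  <= favg f x0 + h x0.
Proof.
elim: t => [|t IH]; first by rewrite big_ord0 /=; have := lyapunov_init; lra.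
rewrite (Edraws_saga_stateS gf b px eta x0 t lyapunov) big_ord_recr /=.
have decrease : Edraws t (fun w =>
      avg_draw (fun dl => lyapunov (saga_step gf b px eta (state w t) (Some dl)))
      + eta / 2 * sq_grad_map (state w t))
    <= Edraws t (fun w => lyapunov (state w t)).
  apply: le_Edraws => // w; have := saga_state_dom w t.
  by case: (state w t) => x al /= Dx; apply: lyapunov_decrease.
rewrite EdrawsD EdrawsZ // in decrease.
set S := \big[Rplus/R0]_(a < t) _ in IH *; lra.
Qed.

Lemma sum_Edraws_sq_grad_map_le T :
  \big[Rplus/R0]_(a < T) Edraws a (fun w => sq_grad_map (state w a))
  <= 2 / eta * (favg f x0 + h x0 - (favg f xstar + h xstar)).
Proof.
have := lyapunov_telescope T.
have : favg f xstar + h xstar <= Edraws T (fun w => lyapunov (state w T)).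
  rewrite -(@Edraws_const n b n_gt0 T (favg f xstar + h xstar)).
  by apply: le_Edraws => // w; apply/lyapunov_ge_opt/saga_state_dom.
have := eta_gt0 => eta0 opt_le tele.
apply: (Rmult_le_reg_l (eta / 2)); first lra.
have -> : eta / 2 * (2 / eta * (favg f x0 + h x0 - (favg f xstar + h xstar)))
  = favg f x0 + h x0 - (favg f xstar + h xstar) by field; lra.
lra.
Qed.
End Lyapunov.

Theorem theorem6 (n d b T : nat) (Hn : (1 <= n)%nat) (Hd : (1 <= d)%nat)
  (Hb : (1 <= b)%nat) (Hbn : (b <= n)%nat) (HT : (1 <= T)%nat)
  (f : 'I_n -> vec d -> R) (gf : 'I_n -> vec d -> vec d) (L : R) (HL : 0 < L)
  (Hgrad : forall i, is_gradient (f i) (gf i))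
  (Hsmooth : forall i x y, norm (vsub (gf i x) (gf i y)) <= L * norm (vsub x y))
  (D : vec d -> Prop) (h : vec d -> R)
  (Hproper : ext_proper D) (Hconv : ext_convex D h) (Hclosed : vclosed_set D)
  (Hlsc : ext_lsc D h)
  (xstar : vec d) (Hxs : D xstar)
  (Hmin : forall y, D y -> favg f xstar + h xstar <= favg f y + h y)
  (rho : R) (Hrho : 0 < rho < 1 / 2)
  (Hcond : 16 * INR n ^ 2 * rho ^ 2 / INR b ^ 3 + rho <= 1)
  (px : vec d -> vec d) (Hprox : is_prox D h (rho / L) px)
  (x0 : vec d) (Hx0 : D x0) :
  expected_sq_grad_map gf b T px (rho / L) x0
    <= 2 * L * ((favg f x0 + h x0) - (favg f xstar + h xstar))
       / (rho * (1 - 2 * rho) * INR T).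
Proof.
have T0 : 0 < INR T by apply/lt_0_INR/ltP.
have gap0 : 0 <= favg f x0 + h x0 - (favg f xstar + h xstar) by have := Hmin _ Hx0; lra.
rewrite (expected_sq_grad_map_Edraws gf b T px (rho / L) x0 Hn HT).
have := sum_Edraws_sq_grad_map_le b f gf L D h rho px Hn Hb Hbn HL Hgrad Hsmooth Hconv
  Hrho Hcond Hprox x0 xstar Hx0 Hmin T.
set S := \big[Rplus/R0]_(a < T) _; set gap := _ - _ => S_le.
have -> : 2 * L * gap / (rho * (1 - 2 * rho) * INR T)
  = / INR T * (2 / (rho / L) * gap * / (1 - 2 * rho)) by field; lra.
apply: Rmult_le_compat_l; first exact/Rlt_le/Rinv_0_lt_compat.
have : 1 <= / (1 - 2 * rho) by rewrite -Rinv_1; apply: Rinv_le_contravar; lra.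
have : 0 <= 2 / (rho / L) * gap.
  apply: Rmult_le_pos => //; apply/Rlt_le/Rdiv_lt_0_compat; first lra.
  by apply: Rdiv_lt_0_compat; lra.
nra.
Qed.
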